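(* Let $A\in\mathbb{C}^{n\times n}$ be Hermitian, $f(x)=\frac12\|xx^*-A\|_F^2$ with $\nabla f(x)=2(xx^*-A)x$, and let $x_0\in\mathbb{C}^{n\times p}_*$. Consider two iterations started from the same point and using the same step sizes $\alpha_k>0$: (i) (Euclidean nonlinear CG) $\eta_0=-\nabla f(x_0)$, $x_{k+1}=x_k+\alpha_k\eta_k$, $\eta_{k+1}=-\nabla f(x_{k+1})+\beta_{k+1}\eta_k$ with either $\beta_{k+1}=\max\!\big(0,\frac{\langle\nabla f(x_{k+1}),\nabla f(x_{k+1})-\nabla f(x_k)\rangle}{\langle\nabla f(x_k),\nabla f(x_k)\rangle}\big)$ (Polak–Ribière$_+$) or $\beta_{k+1}=\frac{\langle\nabla f(x_{k+1}),\nabla f(x_{k+1})\rangle}{\langle\nabla f(x_k),\nabla f(x_k)\rangle}$ (Fletcher–Reeves); (ii) (lifted Riemannian CG on $\mathbb{C}^{n\times p}_*/\mathcal O_p$) $y_0=x_0$, $\zeta_0=-\nabla f(y_0)$, $y_{k+1}=y_k+\alpha_k\zeta_k$, $\zeta_{k+1}=-\nabla f(y_{k+1})+\gamma_{k+1}P^{\mathcal H}_{y_{k+1}}(\zeta_k)$, with either $\gamma_{k+1}=\max\!\big(0,\frac{\langle\nabla f(y_{k+1}),\nabla f(y_{k+1})-P^{\mathcal H}_{y_{k+1}}(\nabla f(y_k))\rangle}{\langle\nabla f(y_k),\nabla f(y_k)\rangle}\big)$ (PR$_+$) or $\gamma_{k+1}=\frac{\langle\nabla f(y_{k+1}),\nabla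 f(y_{k+1})\rangle}{\langle\nabla f(y_k),\nabla f(y_k)\rangle}$ (FR), the same rule being used in (i) and (ii). Assume all iterates lie in $\mathbb{C}^{n\times p}_*$ and all denominators are nonzero. Then $y_k=x_k$ and $\zeta_k=\eta_k$ for all $k\ge0$.
   Context: $\mathbb{C}^{n\times p}_*=\{X\in\mathbb{C}^{n\times p}:\operatorname{rank}X=p\}$; $\mathcal O_p$ is the group of $p\times p$ unitary matrices acting by right multiplication. $\mathbb{C}^{n\times p}$ is a real vector space with inner product $\langle U,V\rangle=\Re\operatorname{tr}(U^*V)$. For $y\in\mathbb{C}^{n\times p}_*$ the horizontal space is $\mathcal H_y=\{z: y^*z=z^*y\}$, and the orthogonal projection onto it is $P^{\mathcal H}_y(z)=z-y\Omega$ where $\Omega$ is the unique solution of $\Omega\,y^*y+y^*y\,\Omega=y^*z-z^*y$. *)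

(* The complex field is abstracted as an arbitrary
   numClosedFieldType C (e.g. complex R for R : realType, or algC). *)
From HB Require Import structures.
From mathcomp Require Import all_boot all_order all_algebra.
From Stdlib Require Import ClassicalEpsilon.
Set Implicit Arguments. Unset Strict Implicit. Unset Printing Implicit Defensive.
Import Order.TTheory GRing.Theory Num.Theory.
Local Open Scope ring_scope.

Section Defs.
Variable C : numClosedFieldType.

Definition mxadj m n (X : 'M[C]_(m, n)) : 'M[C]_(n, m) := (map_mx Num.conj X)^T.

Definition ip m n (U V : 'M[C]_(m, n)) : C := 'Re (\tr (mxadj U *m V)).

Definition gradf n p (A : 'M[C]_n) (x : 'M[C]_(n, p)) : 'M[C]_(n, p) :=
  (2%:R : C) *: ((x *m mxadj x - A) *m x).

(* Omega : the (unique, for full-rank y) solution of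
   Om (y^* y) + (y^* y) Om = y^* z - z^* y *)
Definition Omega n p (y z : 'M[C]_(n, p)) : 'M[C]_p :=
  epsilon (inhabits 0) (fun Om : 'M[C]_p =>
    Om *m (mxadj y *m y) + (mxadj y *m y) *m Om = mxadj y *m z - mxadj z *m y).

Definition projH n p (y z : 'M[C]_(n, p)) : 'M[C]_(n, p) := z - y *m Omega y z.

Inductive cg_rule := PRplus | FR.

Definition beta_coef n p (r : cg_rule) (g1 g0 : 'M[C]_(n, p)) : C :=
  match r with
  | PRplus => Num.max 0 (ip g1 (g1 - g0) / ip g0 g0)
  | FR => ip g1 g1 / ip g0 g0
  end.

Definition gamma_coef n p (r : cg_rule) (y1 g1 g0 : 'M[C]_(n, p)) : C :=
  match r with
  | PRplus => Num.max 0 (ip g1 (g1 - projH y1 g0) / ip g0 g0)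
  | FR => ip g1 g1 / ip g0 g0
  end.
End Defs.

(** Both iterations start from the same point, and by induction the Riemannian
    search direction [zeta k] stays horizontal at [y (k+1)]: gradients of
    [f] are horizontal ([x^* grad f(x)] is Hermitian), and horizontality of a
    direction is preserved by a real step along it. The projection [P^H_y] fixes
    horizontal vectors, so the transported direction is the direction itself, and
    [P^H_y (grad f(y_k))] differs from [grad f(y_k)] by a vertical vector [y Om]
    that is orthogonal to the horizontal [grad f(y_{k+1})]; hence [gamma = beta].
    The only nontrivial linear algebra is that, with [M = y^* y],
    [Om M + M Om = 0] forces [y Om = 0]; for full-rank [y] this makes the
    Lyapunov operator invertible, so [Omega] is well defined. *)
From mathcomp Require Import all_boot all_order all_algebra.
From Stdlib Require Import ClassicalEpsilon.
Import Order.TTheory GRing.Theory Num.Theory.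
Local Open Scope ring_scope.

Set Implicit Arguments. Unset Strict Implicit.

Section ConjugateTranspose.
Variable C : numClosedFieldType.

Lemma mxadjK m n (X : 'M[C]_(m, n)) : mxadj (mxadj X) = X.
Proof. by apply/matrixP=> i j; rewrite !mxE conjCK. Qed.

Lemma mxadjM m n q (X : 'M[C]_(m, n)) (Y : 'M[C]_(n, q)) :
  mxadj (X *m Y) = mxadj Y *m mxadj X.
Proof. by rewrite /mxadj map_mxM trmx_mul. Qed.

Lemma mxadjD m n (X Y : 'M[C]_(m, n)) : mxadj (X + Y) = mxadj X + mxadj Y.
Proof. by apply/matrixP=> i j; rewrite !mxE rmorphD. Qed.

Lemma mxadjN m n (X : 'M[C]_(m, n)) : mxadj (- X) = - mxadj X.
Proof. by apply/matrixP=> i j; rewrite !mxE rmorphN. Qed.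

Lemma mxadjB m n (X Y : 'M[C]_(m, n)) : mxadj (X - Y) = mxadj X - mxadj Y.
Proof. by rewrite mxadjD mxadjN. Qed.

Lemma mxadjZ m n a (X : 'M[C]_(m, n)) : mxadj (a *: X) = a^* *: mxadj X.
Proof. by apply/matrixP=> i j; rewrite !mxE rmorphM. Qed.

Lemma mxtrace_adj n (X : 'M[C]_n) : \tr (mxadj X) = (\tr X)^*.
Proof.
rewrite /mxadj mxtrace_tr /mxtrace rmorph_sum.
by apply: eq_bigr => i _; rewrite mxE.
Qed.

Lemma frobenius_ge0 m n (X : 'M[C]_(m, n)) : 0 <= \tr (mxadj X *m X).
Proof.
apply: sumr_ge0 => j _; rewrite mxE; apply: sumr_ge0 => i _.
by rewrite !mxE -normCKC exprn_ge0.
Qed.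

Lemma frobenius_eq0 m n (X : 'M[C]_(m, n)) : \tr (mxadj X *m X) = 0 -> X = 0.
Proof.
have sq_ge0 i j : 0 <= (X i j)^* * X i j by rewrite -normCKC exprn_ge0.
rewrite /mxtrace => /eqP; rewrite psumr_eq0; last first.
  by move=> j _; rewrite mxE; apply: sumr_ge0 => i _; rewrite !mxE.
move=> /allP col0; apply/matrixP=> i j; rewrite mxE.
have := col0 j (mem_index_enum _); rewrite mxE psumr_eq0; last first.
  by move=> k _; rewrite !mxE.
move=> /allP /(_ i (mem_index_enum _)); rewrite !mxE -normCKC.
by rewrite expf_eq0 /= normr_eq0 => /eqP.
Qed.

End ConjugateTranspose.

Section LyapunovOperator.
Variables (C : numClosedFieldType) (n p : nat).
Implicit Types (y z g : 'M[C]_(n, p)) (K S : 'M[C]_p).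

Definition lyap (M K : 'M[C]_p) : 'M[C]_p := K *m M + M *m K.

(* With [M = y^* y] and [K M = - M K], the Frobenius norms of [M K] and of
   [y K y^*] are opposite, so both vanish; then so does that of [y K]. *)
Lemma lyap_gram_eq0 y K : lyap (mxadj y *m y) K = 0 -> y *m K = 0.
Proof.
set M := mxadj y *m y => lyapK0.
have KM : K *m M = - (M *m K).
  by apply/eqP; rewrite -subr_eq0 opprK; apply/eqP.
have norm_yKy : \tr (mxadj (y *m K *m mxadj y) *m (y *m K *m mxadj y))
              = - \tr (mxadj (M *m K) *m (M *m K)).
  rewrite !mxadjM mxadjK -!mulmxA mxtrace_mulC.
  have -> : mxadj K *m (mxadj y *m (y *m (K *m mxadj y))) *m y
          = mxadj K *m (M *m (K *m M)) by rewrite /M !mulmxA.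
  by rewrite KM mulmxN mulmxN linearN /= !mulmxA.
have MK0 : M *m K = 0.
  apply: frobenius_eq0; apply/eqP; rewrite eq_le frobenius_ge0 andbT.
  by rewrite -oppr_ge0 -norm_yKy frobenius_ge0.
apply: frobenius_eq0.
by rewrite mxadjM -mulmxA (mulmxA (mxadj y)) -/M MK0 mulmx0 mxtrace0.
Qed.

Lemma lyap_gram_surj y S : \rank y = p -> exists K, lyap (mxadj y *m y) K = S.
Proof.
move=> ry; set M := mxadj y *m y.
have [B By1] : exists B : 'M[C]_(p, n), B *m y = 1%:M.
  by apply/row_fullP; rewrite /row_full ry.
have lyap_inj K : lyap M K = 0 -> K = 0.
  by move=> /lyap_gram_eq0 yK0; rewrite -(mul1mx K) -By1 -mulmxA yK0 mulmx0.
set N := lin_mx (mulmxr M) + lin_mx (mulmx M).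
have mxvec_lyap K : mxvec K *m N = mxvec (lyap M K).
  by rewrite mulmxDr !mul_vec_lin /= /lyap linearD.
have N_unit : N \in unitmx.
  rewrite -row_free_unit -kermx_eq0; apply/eqP/row_matrixP => i.
  rewrite row0.
  have kerN : row i (kermx N) *m N = 0 by rewrite -row_mul mulmx_ker row0.
  rewrite -(vec_mxK (row i (kermx N))) mxvec_lyap in kerN.
  have : lyap M (vec_mx (row i (kermx N))) = 0.
    by apply: (can_inj (@mxvecK _ _ _)); rewrite kerN linear0.
  by move=> /lyap_inj /(congr1 mxvec); rewrite vec_mxK linear0.
exists (vec_mx (mxvec S *m invmx N)).
by apply: (can_inj (@mxvecK _ _ _)); rewrite -mxvec_lyap vec_mxK mulmxKV.
Qed.

Lemma OmegaP y z : \rank y = p ->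
  lyap (mxadj y *m y) (Omega y z) = mxadj y *m z - mxadj z *m y.
Proof.
move=> ry; have [K lyapK] := lyap_gram_surj (mxadj y *m z - mxadj z *m y) ry.
exact: (epsilon_spec (inhabits 0) (fun Om => lyap (mxadj y *m y) Om = _)
  (ex_intro _ K lyapK)).
Qed.

Definition horizontal y z := mxadj y *m z = mxadj z *m y.

Lemma projH_id y z : \rank y = p -> horizontal y z -> projH y z = z.
Proof.
move=> ry yz; have := OmegaP z ry.
by rewrite yz subrr /projH => /lyap_gram_eq0 ->; rewrite subr0.
Qed.

(* [Om + Om^*] solves the homogeneous equation, so [y Om^* = - y Om], while
   horizontality of [g] makes [tr (g^* y Om^* )] the conjugate of [tr (g^* y Om)]. *)
Lemma ip_horizontal_vertical y g z : \rank y = p -> horizontal y g ->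
  ip g (y *m Omega y z) = 0.
Proof.
move=> ry yg; set Om := Omega y z.
have OmE := OmegaP z ry; rewrite -/Om in OmE.
have yOm_skew : y *m (Om + mxadj Om) = 0.
  apply: lyap_gram_eq0; move: OmE; rewrite /lyap => OmE.
  have := congr1 (@mxadj _ _ _) OmE; rewrite mxadjB mxadjD !mxadjM !mxadjK.
  move=> OmE'; rewrite mulmxDl mulmxDr addrACA OmE (addrC (mxadj Om *m _)) OmE'.
  by rewrite addrC addrA subrK subrr.
have conj_tr : (\tr (mxadj g *m (y *m Om)))^* = \tr (mxadj g *m (y *m mxadj Om)).
  by rewrite -mxtrace_adj !mxadjM mxadjK -mulmxA yg mxtrace_mulC mulmxA.
rewrite /ip ReE conj_tr -mxtraceD -mulmxDr -mulmxDr yOm_skew mulmx0 mxtrace0.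
by rewrite mul0r.
Qed.

Lemma horizontal_gradf (A : 'M[C]_n) y : mxadj A = A -> horizontal y (gradf A y).
Proof.
move=> hA; rewrite /horizontal /gradf mxadjZ mxadjM mxadjB mxadjM mxadjK hA.
by rewrite rmorph_nat -scalemxAr -scalemxAl mulmxA.
Qed.

Lemma horizontalN y z : horizontal y z -> horizontal y (- z).
Proof. by rewrite /horizontal mxadjN mulmxN mulNmx => ->. Qed.

Lemma horizontalD y z1 z2 :
  horizontal y z1 -> horizontal y z2 -> horizontal y (z1 + z2).
Proof. by rewrite /horizontal mxadjD mulmxDr mulmxDl => -> ->. Qed.

Lemma horizontalZ y z a : a \is Num.real -> horizontal y z -> horizontal y (a *: z).
Proof.
move=> /conj_Creal a_real; rewrite /horizontal mxadjZ a_real.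
by rewrite -scalemxAl -scalemxAr => ->.
Qed.

Lemma horizontal_step y z a :
  a \is Num.real -> horizontal y z -> horizontal (y + a *: z) z.
Proof.
move=> /conj_Creal a_real yz; rewrite /horizontal mxadjD mulmxDl mulmxDr yz.
by rewrite mxadjZ a_real -scalemxAl -scalemxAr.
Qed.

Lemma beta_coef_real r g1 g0 : beta_coef r g1 g0 \is Num.real.
Proof.
case: r => /=; last by rewrite rpred_div ?Creal_Re.
by rewrite /Num.max; case: ifP => // _; rewrite rpred_div ?Creal_Re.
Qed.

Lemma gamma_beta_coef r y g1 g0 : \rank y = p -> horizontal y g1 ->
  gamma_coef r y g1 g0 = beta_coef r g1 g0.
Proof.
move=> ry yg1; case: r => //=.
by rewrite /projH opprB addrCA /ip mulmxDr mxtraceD raddfD /= -/(ip _ _)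
  (ip_horizontal_vertical _ ry yg1) add0r.
Qed.

End LyapunovOperator.

Theorem theorem3p2 (C : numClosedFieldType) (n p : nat) (A : 'M[C]_n)
  (rule : cg_rule) (alpha : nat -> C)
  (x eta y zeta : nat -> 'M[C]_(n, p)) :
  mxadj A = A ->
  (forall k, 0 < alpha k) ->
  eta 0%N = - gradf A (x 0%N) ->
  (forall k, x k.+1 = x k + alpha k *: eta k) ->
  (forall k, eta k.+1 = - gradf A (x k.+1)
       + beta_coef rule (gradf A (x k.+1)) (gradf A (x k)) *: eta k) ->
  y 0%N = x 0%N ->
  zeta 0%N = - gradf A (y 0%N) ->
  (forall k, y k.+1 = y k + alpha k *: zeta k) ->
  (forall k, zeta k.+1 = - gradf A (y k.+1)
       + gamma_coef rule (y k.+1) (gradf A (y k.+1)) (gradf A (y k))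
           *: projH (y k.+1) (zeta k)) ->
  (forall k, \rank (x k) = p) ->
  (forall k, \rank (y k) = p) ->
  (forall k, ip (gradf A (x k)) (gradf A (x k)) != 0) ->
  (forall k, ip (gradf A (y k)) (gradf A (y k)) != 0) ->
  forall k, y k = x k /\ zeta k = eta k.
Proof.
move=> hA alpha_gt0 eta0 xS etaS y0 zeta0 yS zetaS _ ry _ _.
suff agree k : [/\ y k = x k, zeta k = eta k & horizontal (y k) (zeta k)].
  by move=> k; case: (agree k).
elim: k => [|k [yx zetaeta hor]].
  by rewrite zeta0 y0 eta0; split=> //; apply/horizontalN/horizontal_gradf.
have hor1 : horizontal (y k.+1) (zeta k).
  by rewrite yS; apply: horizontal_step; first exact: gtr0_real.
have zetaS' : zeta k.+1 = - gradf A (y k.+1)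
    + beta_coef rule (gradf A (y k.+1)) (gradf A (y k)) *: zeta k.
  by rewrite zetaS projH_id // gamma_beta_coef //; apply: horizontal_gradf.
have yx1 : y k.+1 = x k.+1 by rewrite yS xS yx zetaeta.
split=> //; first by rewrite zetaS' etaS yx1 yx zetaeta.
rewrite zetaS'; apply: horizontalD; first exact/horizontalN/horizontal_gradf.
exact/horizontalZ/hor1/beta_coef_real.
Qed.
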